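(* Let $\mathcal{T}$ be a single-elimination tournament with at least two players, let $R$ be a uniformly random bracket of $\mathcal{T}$, and define $q_{\mathrm{pair}}=\min_{a,b\in P(\mathcal{T}),\,a\ne b}\Pr[R(x_{a,b})\in\{a,b\}]$. If $\mathcal{T}$ has $N$ total brackets, then for every scoring system $\sigma$, $\mathrm{res}(\mathcal{T},\sigma)>(1-q_{\mathrm{pair}})N$.
   Context: A single-elimination tournament is a finite directed graph $\mathcal{T}$ such that: (a) $\mathcal{T}$ has exactly one sink (vertex with no out-neighbours); (b) every non-sink vertex has exactly one out-neighbour; (c) $\mathcal{T}$ has no directed cycles; (d) $|N^-(v)|\ne 1$ for every vertex $v$, where $N^-(v)$ denotes the set of in-neighbours of $v$. The players $P(\mathcal{T})$ are the sources and the matches are $M(\mathcal{T})=V(\mathcal{T})\setminus P(\mathcal{T})$. For a vertex $u$, $P(u)$ is the set of players $a$ for which there is a directed walk from $a$ to $u$ (length $0$ allowed). For distinct players $a,b$, $x_{a,b}$ denotes the unique match $x$ having in-neighbours $u_a,u_b\in N^-(x)$ with $P(u_a)\cap\{a,b\}=\{a\}$ and $P(u_b)\cap\{a,b\}=\{b\}$ (such a match exists and is unique). A bracket is a function $B:V(\mathcal{T})\to P(\mathcal{T})$ with $B(a)=a$ for every player $a$ and $B(x)\in\{B(u):u\in N^-(x)\}$ for every match $x$. A scoring system is any function $\sigma:M(\mathcal{T})\to\mathbb{R}_{>0}$. For brackets $B,B'$ let $\mathrm{score}_\sigma(B,B')=\sum_{x\in M(\mathcal{T}):\,B(x)=B'(x)}\sigma(x)$.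 A set of brackets $\mathcal{B}$ is $\sigma$-resolving if for every pair of distinct brackets $B\ne B'$ there is $B_i\in\mathcal{B}$ with $\mathrm{score}_\sigma(B_i,B)\ne\mathrm{score}_\sigma(B_i,B')$. $\mathrm{res}(\mathcal{T},\sigma)$ is the minimum $r$ such that every set of $r$ brackets is $\sigma$-resolving. *)

From HB Require Import structures.
From mathcomp Require Import all_boot all_order all_algebra.
From mathcomp Require Import reals.
Set Implicit Arguments. Unset Strict Implicit. Unset Printing Implicit Defensive.
Import Order.TTheory GRing.Theory Num.Theory.
Local Open Scope ring_scope.

Section Tournament.
Variable V : finType.
(* the directed graph: e u v means there is an arc u -> v *)
Variable e : rel V.

Definition outN (v : V) : {set V} := [set w | e v w].
Definition inN (v : V) : {set V} := [set u | e u v].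

Definition is_sink (v : V) : bool := #|outN v| == 0%N.

Definition single_elim : Prop :=
  [/\ #|[set v | is_sink v]| = 1%N,
      (forall v, ~~ is_sink v -> #|outN v| = 1%N),
      (forall u v, e u v -> ~~ connect e v u)
    & (forall v, #|inN v| != 1%N)].

Definition is_player (v : V) : bool := #|inN v| == 0%N.
Definition is_match (v : V) : bool := ~~ is_player v.

Definition Pl (u : V) : {set V} := [set a | is_player a && connect e a u].

Definition is_xab (a b x : V) : bool :=
  is_match x &&
  [exists ua, [exists ub,
     [&& e ua x, e ub x,
         Pl ua :&: [set a; b] == [set a] &
         Pl ub :&: [set a; b] == [set b]]]].

Definition xab (a b : V) : option V := [pick x | is_xab a b x].

Definition is_bracket (B : {ffun V -> V}) : bool :=
  [forall a, is_player a ==> (B a == a)] &&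
  [forall x, is_match x ==> [exists u, e u x && (B x == B u)]].

Definition brackets : {set {ffun V -> V}} := [set B | is_bracket B].

Variable R : realType.

Definition pr_pair (a b : V) : R :=
  (#|[set B in brackets |
       if xab a b is Some x then B x \in [set a; b] else false]|%:R)
  / (#|brackets|%:R).

Definition q_pair : R :=
  \big[Num.min/1]_(p : V * V | [&& is_player p.1, is_player p.2 & p.1 != p.2])
     pr_pair p.1 p.2.

(* scoring system: sigma only matters (and is required positive) on matches *)
Definition score (sigma : V -> R) (B B' : {ffun V -> V}) : R :=
  \sum_(x | is_match x && (B x == B' x)) sigma x.

Definition resolving (sigma : V -> R) (S : {set {ffun V -> V}}) : bool :=
  [forall B in brackets, forall B' in brackets,
     (B != B') ==> [exists Bi in S, score sigma Bi B != score sigma Bi B']].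

Definition all_resolving (sigma : V -> R) (r : nat) : bool :=
  [forall S : {set {ffun V -> V}},
     ((S \subset brackets) && (#|S| == r)) ==> resolving sigma S].

Lemma all_resolving_ex (sigma : V -> R) : exists r, all_resolving sigma r.
Proof.
exists (#|{ffun V -> V}|.+1); apply/forallP => S; apply/implyP => /andP [_ /eqP hS].
by have := max_card (mem S); rewrite hS ltnn.
Qed.

Definition res (sigma : V -> R) : nat := ex_minn (all_resolving_ex sigma).

End Tournament.

From HB Require Import structures.
From mathcomp Require Import all_boot all_order all_algebra.
From mathcomp Require Import reals.
Set Implicit Arguments. Unset Strict Implicit. Unset Printing Implicit Defensive.
Import Order.TTheory GRing.Theory Num.Theory.

(* Fix players a <> b and x = x_{a,b}.  Rank the players so that everybody
   outside P(x) beats everybody inside, and inside P(x) a beats b beats the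
   rest; letting the better-ranked player win every match gives a bracket B
   with B(x) = a, in which b wins the child of x on its side and the parent
   of x is won from outside P(x).  Hence B' := B with x reset to b is also a
   bracket.  As B and B' differ only at x, no bracket B_i with
   B_i(x) \notin {a, b} separates them, so the N (1 - Pr[R(x) \in {a, b}])
   such brackets do not form a resolving set; take the worst pair. *)

Lemma setI_pair_eq1 (T : finType) (A : {set T}) a b : a != b ->
  (A :&: [set a; b] == [set a]) = (a \in A) && (b \notin A).
Proof.
move=> hab; apply/eqP/andP => [/setP h|[ha hb]].
  by move: (h a) (h b); rewrite !inE !eqxx (eq_sym b) (negbTE hab) !andbT => -> ->.
apply/setP => z; rewrite !inE; have [->|hza] := eqVneq z a; first by rewrite ha.
by have [->|_] := eqVneq z b; rewrite ?(negbTE hb) ?andbF.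
Qed.

Definition lex_rank (T : finType) (g : T -> nat) (v : T) : nat :=
  g v * #|T| + enum_rank v.

Lemma lex_rank_inj (T : finType) (g : T -> nat) : injective (lex_rank g).
Proof.
move=> c d /(congr1 (modn^~ #|T|)).
by rewrite /lex_rank !modnMDl !modn_small // => /val_inj/enum_rank_inj.
Qed.

Lemma lex_rank_lt (T : finType) (g : T -> nat) c d :
  (g c < g d)%N -> (lex_rank g c < lex_rank g d)%N.
Proof.
move=> hcd; apply: leq_trans (leq_addr _ _); apply: leq_trans (leq_mul hcd (leqnn _)).
by rewrite mulSn addnC ltn_add2l ltn_ord.
Qed.

Section Paths.
Variables (V : finType) (e : rel V).

Lemma connect_last_arc c x :
  connect e c x -> c = x \/ exists2 u, connect e c u & e u x.
Proof.
move=> /connectP [p hp ->]; elim/last_ind: p hp => [|p z _] /=; first by left.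
rewrite rcons_path last_rcons => /andP [hp hz]; right; exists (last c p) => //.
by apply/connectP; exists p.
Qed.

Lemma connect_first_arc c x :
  connect e c x -> c = x \/ exists2 z, e c z & connect e z x.
Proof.
move=> /connectP [[|z p] /= hp ->]; first by left.
by case/andP: hp => hz hp; right; exists z => //; apply/connectP; exists p.
Qed.

Lemma in_Pl c v : (c \in Pl e v) = is_player e c && connect e c v.
Proof. by rewrite inE. Qed.

Lemma Pl_connect u v c : connect e u v -> c \in Pl e u -> c \in Pl e v.
Proof. by move=> huv; rewrite !in_Pl => /andP [-> /connect_trans ->]. Qed.

Lemma player_arcF a u : is_player e a -> e u a = false.
Proof.
move=> /eqP/cards0_eq h; apply/negbTE/negP => hu.
by have := in_set0 u; rewrite -h inE hu.
Qed.

Lemma connect_to_player a c : is_player e a -> connect e c a -> c = a.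
Proof.
by move=> ha /connect_last_arc [//|[u _]]; rewrite player_arcF.
Qed.

End Paths.

Section Scores.
Variables (V : finType) (e : rel V).

Lemma is_bracketP (B : {ffun V -> V}) :
  reflect ((forall a, is_player e a -> B a = a) /\
           (forall x, is_match e x -> exists2 u, e u x & B x = B u))
          (is_bracket e B).
Proof.
apply: (iffP andP) => [[/forallP hp /forallP hm]|[hp hm]]; split.
- by move=> a /(implyP (hp a)) /eqP.
- by move=> x /(implyP (hm x)) /existsP [u /andP [hu /eqP]]; exists u.
- by apply/forallP => a; apply/implyP => /hp ->.
- apply/forallP => x; apply/implyP => /hm [u hu hBu].
  by apply/existsP; exists u; rewrite hu hBu eqxx.
Qed.

Lemma score_eq_off (R : realType) (sigma : V -> R) (Bi B B' : {ffun V -> V}) x :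
  (forall v, v != x -> B v = B' v) -> Bi x != B x -> Bi x != B' x ->
  score e sigma Bi B = score e sigma Bi B'.
Proof.
move=> hoff hB hB'; apply: eq_bigl => v; have [->|hvx] := eqVneq v x.
  by rewrite (negbTE hB) (negbTE hB') !andbF.
by rewrite hoff.
Qed.

Lemma card_lt_res_of_unresolved (R : realType) (sigma : V -> R)
    (D : {set {ffun V -> V}}) (B B' : {ffun V -> V}) :
  D \subset brackets e -> B \in brackets e -> B' \in brackets e -> B != B' ->
  {in D, forall Bi, score e sigma Bi B = score e sigma Bi B'} ->
  (#|D| < res e sigma)%N.
Proof.
move=> hD hB hB' hne hsc; rewrite ltnNge; apply/negP => hle.
have /card_gt0P [S] :
    (0 < #|[set S : {set {ffun V -> V}} | S \subset D & #|S| == res e sigma]|)%N.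
  by rewrite cards_draws bin_gt0.
rewrite inE => /andP [hSD hS]; move: hle hS; rewrite /res; case: ex_minnP => r hr _ _ hS.
have /forallP hres : resolving e sigma S.
  by apply: (implyP (forallP hr S)); rewrite (subset_trans hSD hD) hS.
move: (hres B) => /implyP /(_ hB) /forallP /(_ B') /implyP /(_ hB') /implyP /(_ hne).
by case/existsP => Bi /andP [/(subsetP hSD) /hsc ->]; rewrite eqxx.
Qed.

End Scores.

Section SingleElimination.
Variables (V : finType) (e : rel V).
Hypothesis hse : single_elim e.

Lemma arc_acyclic u v : e u v -> ~~ connect e v u.
Proof. by case: hse => _ _ h _; apply: h. Qed.

Lemma arc_neq u v : e u v -> u != v.
Proof.
by move=> huv; apply: contraTneq huv => ->; apply/negP => /arc_acyclic; rewrite connect0.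
Qed.

Lemma out_arc_uniq u y z : e u y -> e u z -> y = z.
Proof.
move=> hy hz; case: hse => _ hout _ _.
have hy' : y \in outN e u by rewrite inE.
have /cards1P [w hw] : #|outN e u| == 1%N.
  by rewrite hout //; apply/negP => /eqP/cards0_eq h; rewrite h inE in hy'.
have hz' : z \in outN e u by rewrite inE.
by move: hy' hz'; rewrite hw !inE => /eqP -> /eqP ->.
Qed.

Lemma connect_succ u v y : connect e u v -> u != v -> e u y -> connect e y v.
Proof.
by case/connect_first_arc => [-> /eqP //|[z hz hzv]] _ hy; rewrite (out_arc_uniq hy hz).
Qed.

Lemma connect_from_total c x w :
  connect e c x -> connect e c w -> connect e x w \/ connect e w x.
Proof.
move=> /connectP [p hp ->]; elim: p c hp => [|z p IH] c /=; first by left.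
case/andP=> hz hp hcw; have [<-|hne] := eqVneq c w.
  by right; apply/connectP; exists (z :: p) => //=; rewrite hz.
exact: IH hp (connect_succ hcw hne hz).
Qed.

Lemma card_ancestors_lt w u :
  e w u -> (#|[set z | connect e z w]| < #|[set z | connect e z u]|)%N.
Proof.
move=> h; apply/proper_card/properP; split.
  by apply/subsetP => z; rewrite !inE => /connect_trans; apply; apply: connect1.
by exists u; rewrite !inE ?connect0 // arc_acyclic.
Qed.

Lemma card_descendants_lt u z :
  e u z -> (#|[set y | connect e z y]| < #|[set y | connect e u y]|)%N.
Proof.
move=> h; apply/proper_card/properP; split.
  by apply/subsetP => y; rewrite !inE; apply: connect_trans; apply: connect1.
by exists u; rewrite !inE ?connect0 // arc_acyclic.
Qed.

Lemma Pl_nonempty v : exists c, c \in Pl e v.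
Proof.
have [u hu hmin] := arg_minnP (P := connect e^~ v)
  (fun u => #|[set z | connect e z u]|) (connect0 e v).
exists u; rewrite in_Pl hu andbT /is_player cards_eq0; apply/eqP/setP => w.
rewrite !inE; apply/negbTE/negP => hw.
by have := hmin w (connect_trans (connect1 hw) hu); rewrite leqNgt card_ancestors_lt.
Qed.

Lemma connect_sink u : exists2 s, is_sink e s & connect e u s.
Proof.
have [d hd hmin] := arg_minnP (P := connect e u)
  (fun z => #|[set y | connect e z y]|) (connect0 e u).
exists d => //; rewrite /is_sink cards_eq0; apply/eqP/setP => z.
rewrite !inE; apply/negbTE/negP => hz.
by have := hmin z (connect_trans hd (connect1 hz)); rewrite leqNgt card_descendants_lt.
Qed.

Lemma sink_uniq s t : is_sink e s -> is_sink e t -> s = t.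
Proof.
case: hse => hsink _ _ _ hs ht.
have /cards1P [w hw] : #|[set v | is_sink e v]| == 1%N by rewrite hsink.
have hs' : s \in [set v | is_sink e v] by rewrite inE.
have ht' : t \in [set v | is_sink e v] by rewrite inE.
by move: hs' ht'; rewrite hw !inE => /eqP -> /eqP ->.
Qed.

Lemma sibling_exists x y : e x y -> exists2 w, e w y & w != x.
Proof.
move=> hxy; case: hse => _ _ _ /(_ y).
rewrite (cardsD1 x) inE hxy add1n => /negP hne.
have /card_gt0P [w] : (0 < #|inN e y :\ x|)%N.
  by rewrite lt0n; apply/negP => /eqP h; rewrite h in hne.
by rewrite !inE => /andP [hwx hwy]; exists w.
Qed.

Lemma xab_exists a b :
  is_player e a -> is_player e b -> a != b -> exists x, is_xab e a b x.
Proof.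
move=> ha hb hab.
have [s hs has] := connect_sink a.
have [s' hs' hbs] := connect_sink b; rewrite -(sink_uniq hs hs') in hbs.
have hs_ab : connect e a s && connect e b s by rewrite has.
have [x /andP [hax hbx] hmin] := arg_minnP
  (P := fun z => connect e a z && connect e b z) (fun z => #|[set y | connect e y z]|) hs_ab.
have not_both u : e u x -> ~~ (connect e a u && connect e b u).
  by move=> hux; apply/negP => /hmin; rewrite leqNgt card_ancestors_lt.
exists x; apply/andP; split.
  apply/negP => hx; move: hab.
  by rewrite (connect_to_player hx hax) (connect_to_player hx hbx) eqxx.
case: (connect_last_arc hax) => [eax|[ua hua huax]].
  by move: hbx; rewrite -eax => /(connect_to_player ha) eba; rewrite eba eqxx in hab.
case: (connect_last_arc hbx) => [ebx|[ub hub hubx]].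
  by move: hax; rewrite -ebx => /(connect_to_player hb) eab; rewrite eab eqxx in hab.
apply/existsP; exists ua; apply/existsP; exists ub; rewrite huax hubx /=.
have hba : b != a by rewrite eq_sym.
rewrite setI_pair_eq1 // setUC setI_pair_eq1 // !in_Pl ha hb hua hub /=.
by move: (not_both _ huax) (not_both _ hubx); rewrite hua hub andbT => -> ->.
Qed.

Lemma Pl_sibling x y w c :
  e x y -> e w y -> w != x -> c \in Pl e w -> c \notin Pl e x.
Proof.
move=> hxy hwy hwx; rewrite !in_Pl => /andP [_ hcw]; apply/negP => /andP [_ hcx].
case: (connect_from_total hcx hcw) => [hxw|hwx'].
  have hxw' : x != w by rewrite eq_sym.
  by move: (connect_succ hxw hxw' hxy); apply/negP/arc_acyclic.
by move: (connect_succ hwx' hwx hwy); apply/negP/arc_acyclic.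
Qed.

Lemma bracket_set_match (B : {ffun V -> V}) x u :
  is_bracket e B -> is_match e x -> e u x ->
  (forall y, e x y -> B y != B x) ->
  is_bracket e [ffun v => if v == x then B u else B v].
Proof.
move=> /is_bracketP [hp hm] hx hux hpar; apply/is_bracketP.
split => v hv; rewrite ffunE; have [evx|nvx] := eqVneq v x.
- by move: hx; rewrite /is_match -evx hv.
- exact: hp.
- by exists u; rewrite ?evx // ffunE (negbTE (arc_neq hux)).
- have [w hwv hBw] := hm v hv; exists w => //; rewrite ffunE.
  by have [ewx|//] := eqVneq w x; move: (hpar v); rewrite -ewx hwv hBw eqxx => /(_ isT).
Qed.

End SingleElimination.

Section RankBracket.
Variables (V : finType) (e : rel V).
Hypothesis hse : single_elim e.
Variable rank : V -> nat.
Hypothesis rank_inj : injective rank.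

Definition rank_winner (v : V) : V :=
  odflt v [pick c in Pl e v | [forall d in Pl e v, rank d <= rank c]].

Lemma rank_winnerP v :
  rank_winner v \in Pl e v /\ {in Pl e v, forall d, rank d <= rank (rank_winner v)}.
Proof.
rewrite /rank_winner; case: pickP => [c /andP [hc /forallP hmax]|hnone] /=.
  by split => // d hd; have /implyP := hmax d; apply.
have [c0 hc0] := Pl_nonempty hse v.
have [m hm hmax] := arg_maxnP rank hc0.
have /negP [] := negbT (hnone m); apply/andP; split; first exact: hm.
by apply/forallP => d; apply/implyP => /hmax.
Qed.

Lemma rank_winner_eq v c :
  c \in Pl e v -> {in Pl e v, forall d, rank d <= rank c} -> rank_winner v = c.
Proof.
move=> hc hmax; have [hw hwmax] := rank_winnerP v.
by apply: rank_inj; apply/eqP; rewrite eqn_leq hmax ?hwmax.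
Qed.

Definition rank_bracket : {ffun V -> V} := [ffun v => rank_winner v].

Lemma rank_bracketP : is_bracket e rank_bracket.
Proof.
apply/is_bracketP; split => v hv; rewrite ffunE; have [hw hwmax] := rank_winnerP v.
  by move: hw; rewrite in_Pl => /andP [_ /(connect_to_player hv)].
move: (hw); rewrite in_Pl => /andP [hwp /connect_last_arc [hwv|[u hwu huv]]].
  by move: hv; rewrite /is_match -hwv hwp.
exists u => //; rewrite ffunE; apply/esym/rank_winner_eq; first by rewrite in_Pl hwp.
by move=> d /(Pl_connect (connect1 huv)) /hwmax.
Qed.

End RankBracket.

Lemma brackets_gt0 (V : finType) (e : rel V) :
  single_elim e -> (0 < #|brackets e|)%N.
Proof.
move=> hse; apply/card_gt0P; exists (rank_bracket e (lex_rank (fun=> 0%N))).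
by rewrite inE (rank_bracketP hse (@lex_rank_inj _ _)).
Qed.


Section PairBrackets.
Variables (V : finType) (e : rel V).
Hypothesis hse : single_elim e.
Variables a b x ub : V.
Hypotheses (hab : a != b) (hx : is_match e x) (hubx : e ub x)
  (hax : a \in Pl e x) (hbub : b \in Pl e ub) (haub : a \notin Pl e ub).

Definition pair_priority (v : V) : nat :=
  if v \notin Pl e x then 3 else if v == a then 2 else if v == b then 1 else 0.

Definition bracket_a : {ffun V -> V} := rank_bracket e (lex_rank pair_priority).

Definition bracket_b : {ffun V -> V} :=
  [ffun v => if v == x then bracket_a ub else bracket_a v].

Lemma bracket_aP : is_bracket e bracket_a.
Proof. exact/rank_bracketP/lex_rank_inj. Qed.

Lemma bracket_a_wins_at v c :
  c \in Pl e v -> {in Pl e v, forall d, d != c -> pair_priority d < pair_priority c} ->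
  bracket_a v = c.
Proof.
move=> hc hmax; rewrite ffunE; apply: rank_winner_eq => //; first exact: lex_rank_inj.
by move=> d hd; have [->//|hdc] := eqVneq d c; apply/ltnW/lex_rank_lt/hmax.
Qed.

Lemma bracket_a_x : bracket_a x = a.
Proof.
apply: bracket_a_wins_at => // d hd hda.
by rewrite /pair_priority hd hax (negbTE hda) /= eqxx; case: (d == b).
Qed.

Lemma bracket_a_ub : bracket_a ub = b.
Proof.
have hbx := Pl_connect (connect1 hubx) hbub.
apply: bracket_a_wins_at => // d hd hdb.
have hda : d != a by apply: contraNneq haub => <-.
rewrite /pair_priority (Pl_connect (connect1 hubx) hd) hbx /=.
by rewrite (negbTE hda) (negbTE hdb) eq_sym (negbTE hab) eqxx.
Qed.

(* The sibling subtree of x feeds a player of top priority into the parent. *)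
Lemma bracket_a_parent y : e x y -> bracket_a y \notin Pl e x.
Proof.
move=> hxy; have [w hwy hwx] := sibling_exists hse hxy.
have [c hc] := Pl_nonempty hse w.
have hcx := Pl_sibling hse hxy hwy hwx hc.
have [_ hmax] := rank_winnerP hse (lex_rank pair_priority) y.
have hwin : bracket_a y = rank_winner e (lex_rank pair_priority) y by rewrite ffunE.
apply/negP => hin; have := hmax c (Pl_connect (connect1 hwy) hc).
rewrite -hwin leqNgt => /negP; apply; apply: lex_rank_lt.
by rewrite /pair_priority hin (negbTE hcx) /=; case: (_ == a); case: (_ == b).
Qed.

Lemma bracket_bP : is_bracket e bracket_b.
Proof.
apply: (bracket_set_match hse bracket_aP hx hubx) => y hxy.
rewrite bracket_a_x; apply: contraNneq (bracket_a_parent hxy) => ->.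
exact: hax.
Qed.

Lemma bracket_b_x : bracket_b x = b.
Proof. by rewrite ffunE eqxx bracket_a_ub. Qed.

Lemma bracket_b_off v : v != x -> bracket_a v = bracket_b v.
Proof. by move=> hvx; rewrite [bracket_b v]ffunE (negbTE hvx). Qed.

End PairBrackets.

Definition pair_hits (V : finType) (e : rel V) (a b : V) : {set {ffun V -> V}} :=
  [set B in brackets e | if xab e a b is Some x then B x \in [set a; b] else false].

Lemma res_gt_pair_misses (V : finType) (e : rel V) (R : realType) (sigma : V -> R) a b :
  single_elim e -> is_player e a -> is_player e b -> a != b ->
  (#|brackets e :\: pair_hits e a b| < res e sigma)%N.
Proof.
move=> hse ha hb hab.
have [x hx hxab] : exists2 x, is_xab e a b x & xab e a b = Some x.
  rewrite /xab; case: pickP => [x hx|hnone]; first by exists x.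
  by have [x hx] := xab_exists hse ha hb hab; move: (hnone x); rewrite hx.
have hba : b != a by rewrite eq_sym.
case/andP: hx => hx /existsP [ua /existsP [ub /and4P [huax hubx]]].
rewrite setI_pair_eq1 // setUC setI_pair_eq1 // => /andP [hua _] /andP [hbub haub].
have hax := Pl_connect (connect1 huax) hua.
apply: (card_lt_res_of_unresolved (B := bracket_a e a b x) (B' := bracket_b e a b x ub)).
- exact: subsetDl.
- by rewrite inE bracket_aP.
- by rewrite inE bracket_bP.
- apply/eqP => /(congr1 (fun B : {ffun V -> V} => B x)).
  by rewrite bracket_a_x // bracket_b_x //; exact/eqP.
- move=> Bi; rewrite !inE hxab => /andP [hmiss hBi]; rewrite hBi !inE negb_or in hmiss.
  case/andP: hmiss => hBia hBib.
  by apply: (score_eq_off _ _ (bracket_b_off e a b ub)); rewrite ?bracket_a_x ?bracket_b_x.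
Qed.

Local Open Scope ring_scope.

Lemma pr_pair_lt_res (V : finType) (e : rel V) (R : realType) (sigma : V -> R) a b :
  single_elim e -> is_player e a -> is_player e b -> a != b ->
  (1 - pr_pair e R a b) * #|brackets e|%:R < (res e sigma)%:R.
Proof.
move=> hse ha hb hab.
have hN : #|brackets e|%:R != 0 :> R by rewrite pnatr_eq0 -lt0n brackets_gt0.
have hsub : pair_hits e a b \subset brackets e.
  by apply/subsetP => B; rewrite inE => /andP [].
rewrite /pr_pair -/(pair_hits e a b) mulrBl mul1r divfK // -natrB ?subset_leq_card //.
by rewrite ltr_nat -(setIidPr hsub) -cardsD res_gt_pair_misses.
Qed.

Theorem proposition4p4 (V : finType) (e : rel V) (R : realType)
    (sigma : V -> R) :
  single_elim e ->
  (2 <= #|[set v | is_player e v]|)%N ->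
  (forall x, is_match e x -> 0 < sigma x) ->
  (1 - q_pair e R) * (#|brackets e|%:R) < (res e sigma)%:R.
Proof.
move=> hse /card_gt1P [a [b [ha hb hab]]] _; rewrite !inE in ha hb.
have res_gt0 : (0 < res e sigma)%N.
  exact: leq_ltn_trans (leq0n _) (res_gt_pair_misses sigma hse ha hb hab).
apply: (big_ind (fun m => (1 - m) * #|brackets e|%:R < (res e sigma)%:R)).
- by rewrite subrr mul0r ltr0n.
- by move=> m1 m2 h1 h2; rewrite /Num.min; case: ifP.
- by move=> [c d] /and3P [hc hd hcd]; exact: pr_pair_lt_res.
Qed.
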